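(* Let $K,G:[0,\infty)\to\mathbb{R}$ be continuous, let $f$ solve $f''+Kf=0$ with $f>0$ on $(0,\infty)$ and $\int_1^\infty f(t)^{-2}dt<\infty$, and let $m$ solve $m''+Gm=0$ with $m(0)=f(0)$, $m'(0)=f'(0)$. Suppose the support of $G-K$ is contained in a bounded interval $[a,b]\subset[1,\infty)$. Set $$C(f,a,b):=\Big(\int_a^\infty f(t)^{-2}dt\Big)\cdot\|f^2|_{[a,b]}\|_2>0.$$ If $C(f,a,b)\,\|G-K\|_2<1$, then $$\alpha(m)\le\frac{C(f,a,b)\,\|G-K\|_2}{1-C(f,a,b)\,\|G-K\|_2}.$$
   Context: Notation: $\|G-K\|_2:=\sqrt{\int_0^\infty|G-K|^2dt}$; $\|f^2|_{[a,b]}\|_2:=\sqrt{\int_a^b f(t)^4dt}$; $\sigma(t):=m(t)/f(t)-1$ for $t>0$; $\alpha(m):=\sup_{t>0}|\sigma(t)|$. *)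

From Stdlib Require Import Reals Lra.
Open Scope R_scope.

Definition continuous_on_nonneg (K : R -> R) : Prop :=
  forall t, 0 <= t -> forall eps, 0 < eps -> exists delta, 0 < delta /\
    forall s, 0 <= s -> Rabs (s - t) < delta -> Rabs (K s - K t) < eps.

Definition deriv_on_nonneg (f df : R -> R) : Prop :=
  forall t, 0 <= t -> forall eps, 0 < eps -> exists delta, 0 < delta /\
    forall h, h <> 0 -> 0 <= t + h -> Rabs h < delta ->
      Rabs ((f (t + h) - f t) / h - df t) < eps.

Definition solves_ode (K f df : R -> R) : Prop :=
  deriv_on_nonneg f df /\ deriv_on_nonneg df (fun t => - K t * f t).

Definition is_integral (g : R -> R) (a b I : R) : Prop :=
  exists pr : Riemann_integrable g a b, RiemannInt pr = I.

Definition improper_int (g : R -> R) (a L : R) : Prop :=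
  (forall x, a <= x -> inhabited (Riemann_integrable g a x)) /\
  forall eps, 0 < eps -> exists N, forall x (pr : Riemann_integrable g a x),
    a <= x -> N <= x -> Rabs (RiemannInt pr - L) < eps.

Definition sigma_mf (m f : R -> R) (t : R) : R := m t / f t - 1.

(* Before a the two equations coincide, so m = f on [0, a] by uniqueness (an
   energy estimate).  Beyond a, sigma' = W / f^2 where the Wronskian
   W = f m' - f' m vanishes at a and W' = (K - G) f m = (K - G) f^2 (1 + sigma).
   If M is the maximum of |sigma| on [a, T], integrating twice gives
   M <= (1 + M) (int_a^b |G - K| f^2) (int_a^oo f^-2), Cauchy-Schwarz bounds the
   first integral by ||G - K||_2 ||f^2|_[a,b]||_2, and M <= X (1 + M) with X < 1
   solves to M <= X / (1 - X). *)

From Stdlib Require Import Reals Lra Psatz.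
Open Scope R_scope.

Lemma Rabs_le_inv z B : Rabs z <= B -> - B <= z <= B.
Proof.
  intros H; pose proof (Rle_abs z); pose proof (Rle_abs (- z)).
  rewrite Rabs_Ropp in *; lra.
Qed.

Lemma deriv_nonneg_le (h dh : R -> R) c d : c <= d ->
  (forall x, c < x < d -> derivable_pt_lim h x (dh x)) ->
  (forall x, c <= x <= d -> continuity_pt h x) ->
  (forall x, c < x < d -> 0 <= dh x) -> h c <= h d.
Proof.
  intros Hcd Hd Hc Hpos.
  destruct (Rle_lt_or_eq_dec c d Hcd) as [Hlt|<-]; [|lra].
  pose (pr := fun x (P : c < x < d) =>
    exist (fun l => derivable_pt_lim h x l) (dh x) (Hd x P)).
  destruct (MVT h id c d pr (fun x _ => derivable_pt_id x) Hlt Hc) as [x [P E]].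
  - intros; apply derivable_continuous_pt, derivable_pt_id.
  - rewrite derive_pt_id in E; unfold id in E; simpl in E.
    specialize (Hpos x P); nra.
Qed.

Lemma abs_sub_le_of_deriv_bound (h dh g dg : R -> R) c d : c <= d ->
  (forall x, c < x < d -> derivable_pt_lim h x (dh x)) ->
  (forall x, c < x < d -> derivable_pt_lim g x (dg x)) ->
  (forall x, c <= x <= d -> continuity_pt h x) ->
  (forall x, c <= x <= d -> continuity_pt g x) ->
  (forall x, c < x < d -> Rabs (dh x) <= dg x) ->
  Rabs (h d - h c) <= g d - g c.
Proof.
  intros Hcd Dh Dg Ch Cg Hb.
  assert (Hlo : g c - h c <= g d - h d).
  { apply (deriv_nonneg_le (fun x => g x - h x) (fun x => dg x - dh x)); auto.
    - intros; apply derivable_pt_lim_minus; auto.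
    - intros; apply continuity_pt_minus; auto.
    - intros x Hx; specialize (Hb x Hx); apply Rabs_le_inv in Hb; lra. }
  assert (Hhi : g c + h c <= g d + h d).
  { apply (deriv_nonneg_le (fun x => g x + h x) (fun x => dg x + dh x)); auto.
    - intros; apply derivable_pt_lim_plus; auto.
    - intros; apply continuity_pt_plus; auto.
    - intros x Hx; specialize (Hb x Hx); apply Rabs_le_inv in Hb; lra. }
  apply Rabs_le; lra.
Qed.

Lemma continuity_pt_of_derivable_pt_lim (h : R -> R) x l :
  derivable_pt_lim h x l -> continuity_pt h x.
Proof. intros H; apply derivable_continuous_pt; exists l; exact H. Qed.

Lemma primitive_eq (g : R -> R) c d (Hcd : c <= d)
  (pr : forall x, c <= x -> x <= d -> Riemann_integrable g c x) x
  (Hcx : c <= x) (Hxd : x <= d) : primitive Hcd pr x = RiemannInt (pr x Hcx Hxd).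
Proof.
  unfold primitive; destruct (Rle_dec c x); [|contradiction].
  destruct (Rle_dec x d); [apply RiemannInt_P5|contradiction].
Qed.

Lemma RiemannInt_ge0 (g : R -> R) c d (pr : Riemann_integrable g c d) : c <= d ->
  (forall x, c < x < d -> 0 <= g x) -> 0 <= RiemannInt pr.
Proof.
  intros Hcd Hg; pose proof (RiemannInt_P15 (RiemannInt_P14 c d 0)) as E.
  rewrite Rmult_0_l in E; rewrite <- E; apply RiemannInt_P19; auto.
Qed.

Lemma RiemannInt_le_subinterval (g : R -> R) c x y d
  (pr : Riemann_integrable g x y) (pr' : Riemann_integrable g c d) :
  c <= x -> x <= y -> y <= d -> (forall s, c < s < d -> 0 <= g s) ->
  RiemannInt pr <= RiemannInt pr'.
Proof.
  intros Hcx Hxy Hyd Hg.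
  pose (pr_cy := RiemannInt_P22 pr' (conj (Rle_trans _ _ _ Hcx Hxy) Hyd)).
  pose (pr_yd := RiemannInt_P23 pr' (conj (Rle_trans _ _ _ Hcx Hxy) Hyd)).
  pose (pr_cx := RiemannInt_P22 pr_cy (conj Hcx Hxy)).
  pose (pr_xy := RiemannInt_P23 pr_cy (conj Hcx Hxy)).
  rewrite <- (RiemannInt_P26 pr_cy pr_yd pr'), <- (RiemannInt_P26 pr_cx pr_xy pr_cy).
  rewrite (RiemannInt_P5 pr pr_xy).
  assert (0 <= RiemannInt pr_cx) by (apply RiemannInt_ge0; auto; intros; apply Hg; lra).
  assert (0 <= RiemannInt pr_yd) by (apply RiemannInt_ge0; auto; intros; apply Hg; lra).
  lra.
Qed.

Lemma improper_int_ge (g : R -> R) c L x (pr : Riemann_integrable g c x) :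
  improper_int g c L -> (forall s, c < s -> 0 <= g s) -> c <= x -> RiemannInt pr <= L.
Proof.
  intros [Hint Hlim] Hg Hcx.
  destruct (Rle_lt_dec (RiemannInt pr) L) as [|Hlt]; [assumption|exfalso].
  destruct (Hlim (RiemannInt pr - L)) as [N HN]; [lra|].
  assert (Hxy : x <= Rmax x N) by apply Rmax_l.
  destruct (Hint (Rmax x N) ltac:(lra)) as [pry].
  assert (RiemannInt pr <= RiemannInt pry).
  { apply RiemannInt_le_subinterval; auto; try lra; intros; apply Hg; lra. }
  specialize (HN _ pry ltac:(lra) (Rmax_r x N)).
  apply Rabs_def2 in HN; lra.
Qed.

Lemma abs_sub_le_RiemannInt (h dh g : R -> R) k c d (pr : Riemann_integrable g c d) :
  c <= d ->
  (forall x, c < x < d -> derivable_pt_lim h x (dh x)) ->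
  (forall x, c <= x <= d -> continuity_pt h x) ->
  (forall x, c <= x <= d -> continuity_pt g x) ->
  (forall x, c < x < d -> Rabs (dh x) <= k * g x) ->
  Rabs (h d - h c) <= k * RiemannInt pr.
Proof.
  intros Hcd Dh Ch Cg Hb.
  pose (P := primitive Hcd (FTC_P1 Hcd Cg)).
  assert (DP : forall x, c <= x <= d -> derivable_pt_lim P x (g x))
    by (intros; apply RiemannInt_P28; auto).
  assert (Hint : P d - P c = RiemannInt pr).
  { unfold P; rewrite (primitive_eq _ _ _ Hcd _ d Hcd (Rle_refl d)).
    rewrite (primitive_eq _ _ _ Hcd _ c (Rle_refl c) Hcd), RiemannInt_P9.
    rewrite (RiemannInt_P5 _ pr); ring. }
  replace (k * RiemannInt pr) with (k * P d - k * P c) by (rewrite <- Hint; ring).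
  apply (abs_sub_le_of_deriv_bound h dh (fun x => k * P x) (fun x => k * g x)); auto.
  - intros; apply derivable_pt_lim_scal, DP; lra.
  - intros x Hx; apply continuity_pt_scal, (continuity_pt_of_derivable_pt_lim _ _ _ (DP x Hx)).
Qed.

Lemma le_sqrt_mul_of_discriminant A B D : 0 <= A -> 0 <= D ->
  (forall l, 2 * l * B <= D + l ^ 2 * A) -> B <= sqrt A * sqrt D.
Proof.
  intros HA HD H.
  assert (0 <= sqrt A * sqrt D) by (apply Rmult_le_pos; apply sqrt_pos).
  destruct (Rle_lt_dec B 0) as [|HB]; [lra|].
  destruct (Rle_lt_or_eq_dec 0 A HA) as [HAp|<-].
    assert (HBA : B ^ 2 <= A * D).
    { specialize (H (B / A)).
      replace (2 * (B / A) * B) with (2 * B ^ 2 / A) in H by (field; lra).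
      replace ((B / A) ^ 2 * A) with (B ^ 2 / A) in H by (field; lra).
      apply Rmult_le_reg_r with (/ A); [apply Rinv_0_lt_compat; lra|].
      replace (A * D * / A) with D by (field; lra); unfold Rdiv in H; lra. }
    rewrite <- sqrt_mult, <- (sqrt_pow2 B) by lra; apply sqrt_le_1; nra.
  - specialize (H ((D + 1) / (2 * B))).
    replace (2 * ((D + 1) / (2 * B)) * B) with (D + 1) in H by (field; lra); lra.
Qed.

Lemma RiemannInt_Cauchy_Schwarz (u v : R -> R) c d
  (puv : Riemann_integrable (fun x => u x * v x) c d)
  (puu : Riemann_integrable (fun x => u x ^ 2) c d)
  (pvv : Riemann_integrable (fun x => v x ^ 2) c d) : c <= d ->
  RiemannInt puv <= sqrt (RiemannInt puu) * sqrt (RiemannInt pvv).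
Proof.
  intros Hcd.
  apply le_sqrt_mul_of_discriminant;
    try (apply RiemannInt_ge0; auto; intros; apply pow2_ge_0).
  intros l.
  pose (p1 := RiemannInt_P10 (l ^ 2) pvv puu).
  pose (p2 := RiemannInt_P10 (-2 * l) p1 puv).
  assert (Hsq : 0 <= RiemannInt p2).
  { apply RiemannInt_ge0; auto; intros x _; cbv beta.
    replace (v x ^ 2 + l ^ 2 * u x ^ 2 + -2 * l * (u x * v x))
      with ((v x - l * u x) ^ 2) by ring.
    apply pow2_ge_0. }
  pose proof (RiemannInt_P13 p1 puv p2); pose proof (RiemannInt_P13 pvv puu p1); lra.
Qed.

Lemma derivable_pt_lim_of_deriv_on_nonneg (F dF : R -> R) t :
  deriv_on_nonneg F dF -> 0 < t -> derivable_pt_lim F t (dF t).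
Proof.
  intros HD Ht eps Heps; destruct (HD t (Rlt_le _ _ Ht) eps Heps) as [d [Hd Hh]].
  exists (mkposreal _ (Rmin_pos _ _ Hd Ht)); simpl; intros h Hh0 Hlt.
  pose proof (Rmin_l d t); pose proof (Rmin_r d t).
  apply Hh; auto; [|lra].
  apply Rabs_def2 in Hlt; lra.
Qed.

Lemma continuous_on_nonneg_of_deriv (F dF : R -> R) :
  deriv_on_nonneg F dF -> continuous_on_nonneg F.
Proof.
  intros HD t Ht eps Heps; destruct (HD t Ht 1 Rlt_0_1) as [d [Hd Hh]].
  set (c := Rabs (dF t) + 1); assert (Hc : 0 < c) by (pose proof (Rabs_pos (dF t)); unfold c; lra).
  exists (Rmin d (eps / c)); split; [apply Rmin_pos; auto; apply Rdiv_lt_0_compat; auto|].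
  intros s Hs Hst; pose proof (Rmin_l d (eps / c)); pose proof (Rmin_r d (eps / c)).
  destruct (Req_dec s t) as [->|Hne]; [rewrite Rminus_diag, Rabs_R0; auto|].
  assert (Hq : Rabs ((F s - F t) / (s - t)) < c).
  { specialize (Hh (s - t) ltac:(lra)); replace (t + (s - t)) with s in Hh by ring.
    pose proof (Rabs_triang_inv ((F s - F t) / (s - t)) (dF t)); unfold c.
    specialize (Hh Hs ltac:(lra)); lra. }
  replace (F s - F t) with ((s - t) * ((F s - F t) / (s - t))) by (field; lra).
  rewrite Rabs_mult.
  apply Rle_lt_trans with (Rabs (s - t) * c).
  - apply Rmult_le_compat_l; [apply Rabs_pos|lra].
  - apply Rlt_le_trans with (eps / c * c); [apply Rmult_lt_compat_r; lra|].
    right; field; lra.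
Qed.

Lemma continuity_pt_comp_Rmax0 (F : R -> R) t :
  continuous_on_nonneg F -> 0 <= t -> continuity_pt (fun s => F (Rmax 0 s)) t.
Proof.
  intros HF Ht eps Heps; destruct (HF t Ht eps Heps) as [d [Hd Hs]].
  exists d; split; [exact Hd|]; intros x [_ Hx]; simpl in *; unfold R_dist in *.
  rewrite (Rmax_right 0 t Ht); apply Hs; [apply Rmax_l|].
  unfold Rmax; destruct (Rle_dec 0 x); [exact Hx|].
  apply Rle_lt_trans with (2 := Hx); rewrite !Rabs_left1; lra.
Qed.

Lemma continuity_pt_of_continuous_on_nonneg (F : R -> R) t :
  continuous_on_nonneg F -> 0 < t -> continuity_pt F t.
Proof.
  intros HF Ht.
  apply (continuity_pt_locally_ext (fun s => F (Rmax 0 s)) F t t Ht).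
  - intros y Hy; unfold Rdist in Hy; apply Rabs_def2 in Hy.
    rewrite Rmax_right by lra; reflexivity.
  - apply continuity_pt_comp_Rmax0; auto; lra.
Qed.

Lemma derivable_pt_lim_comp_Rmax0 (F : R -> R) t l :
  0 < t -> derivable_pt_lim F t l -> derivable_pt_lim (fun s => F (Rmax 0 s)) t l.
Proof.
  intros Ht; apply (derivable_pt_lim_locally_ext _ _ t 0 (t + 1)); [lra|].
  intros z Hz; rewrite Rmax_right by lra; reflexivity.
Qed.

Lemma derivable_pt_lim_exp_scal c x :
  derivable_pt_lim (fun s => exp (c * s)) x (c * exp (c * x)).
Proof.
  replace (c * exp (c * x)) with (exp (c * x) * (c * 1)) by ring.
  apply (derivable_pt_lim_comp (fun s => c * s) exp).
  - apply derivable_pt_lim_scal, derivable_pt_lim_id.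
  - apply derivable_pt_lim_exp.
Qed.

Lemma linear_ode_zero (k u du : R -> R) c d : c <= d ->
  (forall x, c <= x <= d -> continuity_pt k x) ->
  (forall x, c <= x <= d -> continuity_pt u x) ->
  (forall x, c <= x <= d -> continuity_pt du x) ->
  (forall x, c < x < d -> derivable_pt_lim u x (du x)) ->
  (forall x, c < x < d -> derivable_pt_lim du x (- k x * u x)) ->
  u c = 0 -> du c = 0 ->
  forall x, c <= x <= d -> u x = 0 /\ du x = 0.
Proof.
  intros Hcd Ck Cu Cdu Du Ddu Hu0 Hdu0 x Hx.
  destruct (continuity_ab_maj (fun s => Rabs (1 - k s)) c d Hcd) as [xm [Hk _]].
  { intros s Hs; apply (continuity_pt_comp (fun s => 1 - k s) Rabs); [|apply Rcontinuity_abs].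
    apply continuity_pt_minus; [apply continuity_pt_const; intros ? ?|apply Ck]; auto. }
  set (L := Rabs (1 - k xm)) in Hk; assert (HL : 0 <= L) by apply Rabs_pos.
  (* E' = 2 u du (1 - k) <= L E, so the energy E decays after weighting by exp (- L s) *)
  pose (E := fun s => u s * u s + du s * du s).
  pose (dE := fun s => 2 * u s * du s * (1 - k s)).
  assert (DE : forall s, c < s < d -> derivable_pt_lim E s (dE s)).
  { intros s Hs; unfold dE; replace (2 * u s * du s * (1 - k s))
      with (du s * u s + u s * du s + ((- k s * u s) * du s + du s * (- k s * u s))) by ring.
    apply derivable_pt_lim_plus; apply derivable_pt_lim_mult; auto. }
  assert (HdE : forall s, c < s < d -> dE s <= L * E s).
  { intros s Hs; specialize (Hk s ltac:(lra)); unfold dE, E.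
    assert (Hpq : Rabs (2 * u s * du s) <= u s * u s + du s * du s).
    { apply Rabs_le; pose proof (Rle_0_sqr (u s + du s));
        pose proof (Rle_0_sqr (u s - du s)); unfold Rsqr in *; split; nra. }
    apply Rle_trans with (Rabs (2 * u s * du s * (1 - k s))); [apply Rle_abs|].
    rewrite Rabs_mult, Rmult_comm; apply Rmult_le_compat; auto; apply Rabs_pos. }
  assert (Hdecay : - (E c * exp (- L * c)) <= - (E x * exp (- L * x))).
  { apply (deriv_nonneg_le (fun s => - (E s * exp (- L * s)))
      (fun s => - (dE s * exp (- L * s) + E s * (- L * exp (- L * s))))); [lra|..].
    - intros s Hs; apply derivable_pt_lim_opp.
      apply (derivable_pt_lim_mult E (fun s => exp (- L * s))).
      + apply DE; lra.
      + apply derivable_pt_lim_exp_scal.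
    - intros s Hs; apply continuity_pt_opp, continuity_pt_mult.
      + unfold E; apply continuity_pt_plus; apply continuity_pt_mult;
          [apply Cu|apply Cu|apply Cdu|apply Cdu]; lra.
      + apply (continuity_pt_of_derivable_pt_lim _ _ _ (derivable_pt_lim_exp_scal _ _)).
    - intros s Hs; specialize (HdE s ltac:(lra)); pose proof (exp_pos (- L * s)); nra. }
  assert (HE0 : E c = 0) by (unfold E; rewrite Hu0, Hdu0; ring).
  rewrite HE0 in Hdecay; pose proof (exp_pos (- L * x)).
  assert (E x <= 0) by nra; unfold E in *.
  pose proof (Rle_0_sqr (u x)); pose proof (Rle_0_sqr (du x)); unfold Rsqr in *.
  split; nra.
Qed.

Lemma solutions_agree_before_support (K G f df m dm : R -> R) a :
  continuous_on_nonneg K -> solves_ode K f df -> solves_ode G m dm ->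
  m 0 = f 0 -> dm 0 = df 0 -> (forall t, 0 <= t < a -> G t = K t) ->
  forall t, 0 <= t <= a -> m t = f t /\ dm t = df t.
Proof.
  intros HK [Df Ddf] [Dm Ddm] Hm0 Hdm0 HGK t Ht.
  (* freezing the functions on (-oo, 0] makes them continuous at 0 *)
  assert (C0 : forall F dF x, deriv_on_nonneg F dF -> 0 <= x ->
    continuity_pt (fun s => F (Rmax 0 s)) x).
  { intros F dF x HD Hx; eapply continuity_pt_comp_Rmax0, Hx.
    eapply continuous_on_nonneg_of_deriv, HD. }
  assert (D0 : forall F dF x, deriv_on_nonneg F dF -> 0 < x ->
    derivable_pt_lim (fun s => F (Rmax 0 s)) x (dF x)).
  { intros F dF x HD Hx; apply derivable_pt_lim_comp_Rmax0, derivable_pt_lim_of_deriv_on_nonneg; auto. }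
  destruct (linear_ode_zero (fun s => K (Rmax 0 s))
    (fun s => m (Rmax 0 s) - f (Rmax 0 s)) (fun s => dm (Rmax 0 s) - df (Rmax 0 s))
    0 a ltac:(lra)) with t as [Hu Hdu]; auto; cbv beta.
  - intros x Hx; apply continuity_pt_comp_Rmax0; auto; lra.
  - intros x Hx; apply (continuity_pt_minus (fun s => m (Rmax 0 s)) (fun s => f (Rmax 0 s)));
      [apply (C0 _ _ _ Dm)|apply (C0 _ _ _ Df)]; lra.
  - intros x Hx; apply (continuity_pt_minus (fun s => dm (Rmax 0 s)) (fun s => df (Rmax 0 s)));
      [apply (C0 _ _ _ Ddm)|apply (C0 _ _ _ Ddf)]; lra.
  - intros x Hx; rewrite (Rmax_right 0 x) by lra.
    apply (derivable_pt_lim_minus (fun s => m (Rmax 0 s)) (fun s => f (Rmax 0 s)));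
      [apply (D0 _ _ _ Dm)|apply (D0 _ _ _ Df)]; lra.
  - intros x Hx; rewrite (Rmax_right 0 x) by lra.
    replace (- K x * (m x - f x)) with (- G x * m x - - K x * f x)
      by (rewrite HGK by lra; ring).
    apply (derivable_pt_lim_minus (fun s => dm (Rmax 0 s)) (fun s => df (Rmax 0 s)));
      [apply (D0 _ _ _ Ddm)|apply (D0 _ _ _ Ddf)]; lra.
  - rewrite Rmax_right, Hm0 by lra; ring.
  - rewrite Rmax_right, Hdm0 by lra; ring.
  - rewrite Rmax_right in Hu, Hdu by lra; split; lra.
Qed.

Lemma continuity_pt_pow_comp (h : R -> R) n x :
  continuity_pt h x -> continuity_pt (fun y => h y ^ n) x.
Proof.
  intros Hh; apply (continuity_pt_comp h (fun y => y ^ n)); auto.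
  eapply continuity_pt_of_derivable_pt_lim, derivable_pt_lim_pow.
Qed.

Lemma Rabs_perturbation_le k g fx mx M : 0 < fx -> Rabs (mx / fx - 1) <= M ->
  Rabs ((k - g) * fx * mx) <= (1 + M) * (Rabs (g - k) * fx ^ 2).
Proof.
  intros Hf Hs.
  assert (Hm : Rabs mx <= (1 + M) * fx).
  { replace mx with (fx * (1 + (mx / fx - 1))) by (field; lra).
    rewrite Rabs_mult, Rabs_right by lra; rewrite Rmult_comm.
    apply Rmult_le_compat_r; [lra|].
    pose proof (Rabs_triang 1 (mx / fx - 1)); rewrite Rabs_R1 in *; lra. }
  rewrite !Rabs_mult, (Rabs_minus_sym k g), (Rabs_right fx) by lra.
  pose proof (Rabs_pos (g - k)); pose proof (Rabs_pos mx).
  replace ((1 + M) * (Rabs (g - k) * fx ^ 2))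
    with (Rabs (g - k) * fx * ((1 + M) * fx)) by ring.
  apply Rmult_le_compat_l; [apply Rmult_le_pos|]; lra.
Qed.

Lemma le_div_one_sub M X : 0 <= M -> X < 1 -> M <= X * (1 + M) -> M <= X / (1 - X).
Proof.
  intros HM HX H; unfold Rdiv; apply Rmult_le_reg_r with (1 - X); [lra|].
  rewrite Rmult_assoc, Rinv_l by lra; lra.
Qed.

Definition wronskian (f df m dm : R -> R) (t : R) : R := f t * dm t - df t * m t.

Section Perturbation.

Variables (K G f df m dm : R -> R) (a b : R).
Hypotheses (Ha : 0 < a) (Hab : a <= b)
  (HK : forall t, 0 < t -> continuity_pt K t)
  (HG : forall t, 0 < t -> continuity_pt G t)
  (Df : forall t, 0 < t -> derivable_pt_lim f t (df t))
  (Ddf : forall t, 0 < t -> derivable_pt_lim df t (- K t * f t))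
  (Dm : forall t, 0 < t -> derivable_pt_lim m t (dm t))
  (Ddm : forall t, 0 < t -> derivable_pt_lim dm t (- G t * m t))
  (Hfpos : forall t, 0 < t -> 0 < f t)
  (HGK : forall t, b < t -> G t = K t)
  (Hagree : forall t, 0 <= t <= a -> m t = f t /\ dm t = df t).

Let W := wronskian f df m dm.

Lemma derivable_wronskian t : 0 < t ->
  derivable_pt_lim W t ((K t - G t) * f t * m t).
Proof.
  intros Ht; unfold W, wronskian.
  replace ((K t - G t) * f t * m t)
    with (df t * dm t + f t * (- G t * m t) - ((- K t * f t) * m t + df t * dm t)) by ring.
  apply (derivable_pt_lim_minus (fun s => f s * dm s) (fun s => df s * m s));
    apply derivable_pt_lim_mult; auto.
Qed.

Lemma derivable_sigma t : 0 < t ->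
  derivable_pt_lim (sigma_mf m f) t (W t * / f t ^ 2).
Proof.
  intros Ht; pose proof (Hfpos t Ht); unfold sigma_mf, W, wronskian.
  replace (_ * / f t ^ 2) with ((dm t * f t - df t * m t) / Rsqr (f t) - 0)
    by (unfold Rsqr; field; lra).
  apply (derivable_pt_lim_minus (fun s => m s / f s) (fun _ => 1)).
  - apply (derivable_pt_lim_div m f); auto; lra.
  - apply derivable_pt_lim_const.
Qed.

Lemma continuity_sigma t : 0 < t -> continuity_pt (sigma_mf m f) t.
Proof. intros Ht; exact (continuity_pt_of_derivable_pt_lim _ _ _ (derivable_sigma t Ht)). Qed.

Lemma continuity_perturbation s : 0 < s ->
  continuity_pt (fun s => Rabs (G s - K s) * f s ^ 2) s.
Proof.
  intros Hs; apply continuity_pt_mult.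
  - apply (continuity_pt_comp (fun y => G y - K y) Rabs); [|apply Rcontinuity_abs].
    apply continuity_pt_minus; auto.
  - apply continuity_pt_pow_comp, (continuity_pt_of_derivable_pt_lim _ _ _ (Df s Hs)).
Qed.

Lemma abs_wronskian_le M T
  (pr : Riemann_integrable (fun s => Rabs (G s - K s) * f s ^ 2) a b) :
  b <= T -> (forall s, a <= s <= T -> Rabs (sigma_mf m f s) <= M) ->
  forall s, a <= s <= T -> Rabs (W s) <= (1 + M) * RiemannInt pr.
Proof.
  intros HbT Hsig.
  assert (HM : 0 <= M) by (apply Rle_trans with (2 := Hsig a ltac:(lra)); apply Rabs_pos).
  assert (CW : forall x, 0 < x -> continuity_pt W x)
    by (intros x Hx; exact (continuity_pt_of_derivable_pt_lim _ _ _ (derivable_wronskian x Hx))).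
  assert (HWa : W a = 0)
    by (unfold W, wronskian; destruct (Hagree a ltac:(lra)) as [-> ->]; ring).
  assert (Hbound : forall s, a <= s <= b -> Rabs (W s) <= (1 + M) * RiemannInt pr).
  { intros s Hs.
    pose (pr_as := RiemannInt_P22 pr Hs).
    apply Rle_trans with ((1 + M) * RiemannInt pr_as).
    - replace (W s) with (W s - W a) by (rewrite HWa; ring).
      apply (abs_sub_le_RiemannInt W (fun y => (K y - G y) * f y * m y)); try lra.
      + intros; apply derivable_wronskian; lra.
      + intros; apply CW; lra.
      + intros; apply continuity_perturbation; lra.
      + intros y Hy; apply Rabs_perturbation_le; [apply Hfpos; lra|apply Hsig; lra].
    - apply Rmult_le_compat_l; [lra|].
      apply RiemannInt_le_subinterval; try lra.
      intros y _; apply Rmult_le_pos; [apply Rabs_pos|apply pow2_ge_0]. }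
  intros s Hs; destruct (Rle_lt_dec s b) as [Hsb|Hbs]; [apply Hbound; lra|].
  (* G = K beyond b, so the Wronskian is constant there *)
  assert (HWb : Rabs (W s - W b) <= 0 - 0).
  { apply (abs_sub_le_of_deriv_bound W (fun y => (K y - G y) * f y * m y)
      (fun _ => 0) (fun _ => 0)); try lra.
    - intros; apply derivable_wronskian; lra.
    - intros; apply derivable_pt_lim_const.
    - intros; apply CW; lra.
    - intros; apply continuity_pt_const; intros ? ?; reflexivity.
    - intros y Hy; rewrite HGK, Rminus_diag, !Rmult_0_l, Rabs_R0 by lra; lra. }
  replace (W s) with (W b) by (apply Rabs_le_inv in HWb; lra).
  apply Hbound; lra.
Qed.

Lemma abs_sigma_le_of_wronskian P Iinv s :
  improper_int (fun t => / f t ^ 2) a Iinv -> a <= s ->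
  (forall y, a <= y <= s -> Rabs (W y) <= P) -> Rabs (sigma_mf m f s) <= P * Iinv.
Proof.
  intros Hinv Has HW.
  assert (HP : 0 <= P) by (apply Rle_trans with (2 := HW a ltac:(lra)); apply Rabs_pos).
  assert (Hsa : sigma_mf m f a = 0).
  { unfold sigma_mf; destruct (Hagree a ltac:(lra)) as [-> _].
    pose proof (Hfpos a Ha); field; lra. }
  assert (Hg : forall y, a < y -> 0 <= / f y ^ 2)
    by (intros y Hy; left; apply Rinv_0_lt_compat, pow_lt, Hfpos; lra).
  destruct (proj1 Hinv s Has) as [pr].
  replace (sigma_mf m f s) with (sigma_mf m f s - sigma_mf m f a) by (rewrite Hsa; ring).
  apply Rle_trans with (P * RiemannInt pr).
  - apply (abs_sub_le_RiemannInt _ (fun y => W y * / f y ^ 2)); auto.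
    + intros; apply derivable_sigma; lra.
    + intros; apply continuity_sigma; lra.
    + intros y Hy; apply (continuity_pt_inv (fun y => f y ^ 2)).
      * apply continuity_pt_pow_comp, (continuity_pt_of_derivable_pt_lim _ _ _ (Df y ltac:(lra))).
      * apply pow_nonzero, Rgt_not_eq, Hfpos; lra.
    + intros y Hy; rewrite Rabs_mult, (Rabs_right (/ f y ^ 2)) by (apply Rle_ge, Hg; lra).
      apply Rmult_le_compat_r; [apply Hg|apply HW]; lra.
  - apply Rmult_le_compat_l; auto; apply improper_int_ge; auto.
Qed.

Lemma RiemannInt_perturbation_le Ifour Idiff
  (pr : Riemann_integrable (fun s => Rabs (G s - K s) * f s ^ 2) a b) :
  improper_int (fun t => (G t - K t) ^ 2) 0 Idiff ->
  is_integral (fun t => f t ^ 4) a b Ifour ->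
  RiemannInt pr <= sqrt Idiff * sqrt Ifour.
Proof.
  intros Hdiff [pr4 <-].
  destruct (proj1 Hdiff b ltac:(lra)) as [pr0b].
  pose (prab := RiemannInt_P23 pr0b (conj (Rlt_le _ _ Ha) Hab)).
  assert (puu : Riemann_integrable (fun s => Rabs (G s - K s) ^ 2) a b).
  { refine (@Riemann_integrable_ext _ _ a b _ prab); intros; apply eq_sym, pow2_abs. }
  assert (pvv : Riemann_integrable (fun s => (f s ^ 2) ^ 2) a b).
  { refine (@Riemann_integrable_ext _ _ a b _ pr4); intros; ring. }
  apply Rle_trans with (1 := RiemannInt_Cauchy_Schwarz
    (fun s => Rabs (G s - K s)) (fun s => f s ^ 2) a b pr puu pvv Hab).
  rewrite (RiemannInt_P18 pvv pr4 Hab) by (intros; cbv beta; ring).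
  apply Rmult_le_compat_r; [apply sqrt_pos|apply sqrt_le_1_alt].
  rewrite (RiemannInt_P18 puu prab Hab) by (intros; apply pow2_abs).
  apply Rle_trans with (RiemannInt pr0b).
  - apply RiemannInt_le_subinterval; try lra; intros; apply pow2_ge_0.
  - apply improper_int_ge; auto; [intros; apply pow2_ge_0|lra].
Qed.

Theorem abs_sigma_le Iinv Ifour Idiff :
  improper_int (fun t => / f t ^ 2) a Iinv ->
  is_integral (fun t => f t ^ 4) a b Ifour ->
  improper_int (fun t => (G t - K t) ^ 2) 0 Idiff ->
  Iinv * sqrt Ifour * sqrt Idiff < 1 ->
  forall t, 0 < t -> Rabs (sigma_mf m f t)
    <= Iinv * sqrt Ifour * sqrt Idiff / (1 - Iinv * sqrt Ifour * sqrt Idiff).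
Proof.
  intros Hinv Hfour Hdiff HX t Ht; set (X := Iinv * sqrt Ifour * sqrt Idiff) in *.
  assert (HIinv : 0 <= Iinv).
  { destruct (proj1 Hinv a (Rle_refl a)) as [pr]; rewrite <- (RiemannInt_P9 pr).
    apply improper_int_ge; auto; [|lra].
    intros; left; apply Rinv_0_lt_compat, pow_lt, Hfpos; lra. }
  assert (HX0 : 0 <= X) by (unfold X; repeat apply Rmult_le_pos; auto; apply sqrt_pos).
  destruct (Rle_lt_dec t a) as [Hta|Hat].
  { unfold sigma_mf; destruct (Hagree t ltac:(lra)) as [-> _].
    replace (f t / f t - 1) with 0 by (pose proof (Hfpos t Ht); field; lra).
    rewrite Rabs_R0; apply le_div_one_sub; lra. }
  set (T := Rmax t b); pose proof (Rmax_l t b) as HtT; pose proof (Rmax_r t b) as HbT.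
  destruct (continuity_ab_maj (fun s => Rabs (sigma_mf m f s)) a T) as [x0 [Hmax Hx0]];
    [unfold T; lra|intros s Hs; apply (continuity_pt_comp (sigma_mf m f) Rabs);
      [apply continuity_sigma; lra|apply Rcontinuity_abs]|].
  cbv beta in Hmax; set (M := Rabs (sigma_mf m f x0)) in Hmax.
  pose (pr := continuity_implies_RiemannInt Hab
    (fun s (Hs : a <= s <= b) => continuity_perturbation s ltac:(lra))).
  pose proof (abs_wronskian_le M T pr ltac:(unfold T; lra) Hmax) as HW.
  assert (HM : M <= (1 + M) * RiemannInt pr * Iinv).
  { apply (abs_sigma_le_of_wronskian _ Iinv x0 Hinv); [lra|].
    intros y Hy; apply HW; lra. }
  pose proof (RiemannInt_perturbation_le Ifour Idiff pr Hdiff Hfour) as HQ.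
  apply Rle_trans with M; [apply Hmax; unfold T; lra|].
  apply le_div_one_sub; [apply Rabs_pos|exact HX|].
  assert (0 <= 1 + M) by (pose proof (Rabs_pos (sigma_mf m f x0)); unfold M; lra).
  apply Rle_trans with (1 := HM).
  replace (X * (1 + M)) with ((1 + M) * (sqrt Idiff * sqrt Ifour) * Iinv) by (unfold X; ring).
  apply Rmult_le_compat_r, Rmult_le_compat_l; lra.
Qed.

End Perturbation.

Theorem lemma2p3 (K G f df m dm : R -> R) (a b Iinv Ifour Idiff : R) :
  continuous_on_nonneg K ->
  continuous_on_nonneg G ->
  solves_ode K f df ->
  (forall t, 0 < t -> 0 < f t) ->
  (exists L, improper_int (fun t => / (f t) ^ 2) 1 L) ->
  solves_ode G m dm ->
  m 0 = f 0 -> dm 0 = df 0 ->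
  1 <= a -> a <= b ->
  (forall t, 0 <= t -> (t < a \/ b < t) -> G t = K t) ->
  improper_int (fun t => / (f t) ^ 2) a Iinv ->
  is_integral (fun t => (f t) ^ 4) a b Ifour ->
  improper_int (fun t => (G t - K t) ^ 2) 0 Idiff ->
  let C := Iinv * sqrt Ifour in
  C * sqrt Idiff < 1 ->
  forall t, 0 < t ->
    Rabs (sigma_mf m f t) <= C * sqrt Idiff / (1 - C * sqrt Idiff).
Proof.
  intros HK HG HfK Hfpos _ HmG Hm0 Hdm0 Ha Hab Hsupp Hinv Hfour Hdiff C HC t Ht.
  pose proof HfK as [Df Ddf]; pose proof HmG as [Dm Ddm].
  pose proof (solutions_agree_before_support K G f df m dm a HK HfK HmG Hm0 Hdm0
    (fun s Hs => Hsupp s (proj1 Hs) (or_introl (proj2 Hs)))) as Hagree.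
  apply (abs_sigma_le K G f df m dm a b); auto; try lra; intros s Hs.
  - apply continuity_pt_of_continuous_on_nonneg; auto.
  - apply continuity_pt_of_continuous_on_nonneg; auto.
  - apply (derivable_pt_lim_of_deriv_on_nonneg _ _ _ Df Hs).
  - apply (derivable_pt_lim_of_deriv_on_nonneg _ _ _ Ddf Hs).
  - apply (derivable_pt_lim_of_deriv_on_nonneg _ _ _ Dm Hs).
  - apply (derivable_pt_lim_of_deriv_on_nonneg _ _ _ Ddm Hs).
  - apply Hsupp; lra.
Qed.
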